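(* Let $n\ge1$ be an integer and let $(V,\|\cdot\|_{4n})$ be a normed plane whose unit circle is an affine regular $4n$-gon. Then $$c_B(\|\cdot\|_{4n})=\Big(\cos\frac{\pi}{4n}\Big)^2.$$
   Context: A normed (Minkowski) plane $(V,\|\cdot\|)$ is a two-dimensional real vector space with a norm; $o$ is the origin, $B=\{v:\|v\|\le1\}$ the unit ball, $S=\{v:\|v\|=1\}$ the unit circle. An affine regular $m$-gon centered at $o$ is the image of a Euclidean regular $m$-gon centered at the origin under a linear bijection. For distinct $x,y$, $\mathrm{bis}(x,y)=\{z\in V:\|z-x\|=\|z-y\|\}$. For $x\in S$, the inner projection is $\mathrm{P_I}(x)=\{z/\|z\|: z\in(\mathrm{bis}(-x,x)\cap B)\setminus\{o\}\}$. The sine function is $s:S\times S\to\mathbb{R}$, $s(u,v)=\inf_{t\in\mathbb{R}}\|u+tv\|$. The constant $c_B$ is $c_B(\|\cdot\|)=\inf_{x\in S}\ \inf_{w\in\mathrm{P_I}(x)} s(w,x)$. *)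

(* classical reals. The plane V is modelled as R*R (WLOG). *)
From Stdlib Require Import Reals Lra ClassicalEpsilon ClassicalDescription.
Open Scope R_scope.

Definition vec := (R * R)%type.
Definition vadd (u v : vec) : vec := (fst u + fst v, snd u + snd v).
Definition vscal (a : R) (u : vec) : vec := (a * fst u, a * snd u).
Definition vopp (u : vec) : vec := vscal (-1) u.
Definition vsub (u v : vec) : vec := vadd u (vopp v).
Definition vzero : vec := (0, 0).

Definition is_norm (N : vec -> R) : Prop :=
  (forall x, N x = 0 -> x = vzero) /\
  (forall a x, N (vscal a x) = Rabs a * N x) /\
  (forall x y, N (vadd x y) <= N x + N y).

(* Greatest lower bound and infimum (classical choice; 0 if no glb exists). *)
Definition is_lower_bound (E : R -> Prop) (m : R) : Prop := forall x, E x -> m <= x.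
Definition is_glb (E : R -> Prop) (m : R) : Prop :=
  is_lower_bound E m /\ (forall b, is_lower_bound E b -> b <= m).

Definition Rinf (E : R -> Prop) : R :=
  match excluded_middle_informative (exists m, is_glb E m) with
  | left h => proj1_sig (constructive_indefinite_description _ h)
  | right _ => 0
  end.

Definition reg_vertex (m k : nat) : vec :=
  (cos (2 * PI * INR k / INR m), sin (2 * PI * INR k / INR m)).

Definition on_reg_polygon (m : nat) (p : vec) : Prop :=
  exists (k : nat) (t : R), (k < m)%nat /\ 0 <= t <= 1 /\
    p = vadd (vscal (1 - t) (reg_vertex m k)) (vscal t (reg_vertex m (S k))).

Definition linmap (a b c d : R) (p : vec) : vec :=
  (a * fst p + b * snd p, c * fst p + d * snd p).

(* The unit circle of N is an affine regular m-gon centered at o: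
   the image of a Euclidean regular m-gon under a linear bijection. *)
Definition unit_circle_affine_regular (N : vec -> R) (m : nat) : Prop :=
  exists a b c d : R, a * d - b * c <> 0 /\
    forall v, N v = 1 <-> exists p, on_reg_polygon m p /\ v = linmap a b c d p.

Definition bis (N : vec -> R) (x y z : vec) : Prop := N (vsub z x) = N (vsub z y).

Definition P_I (N : vec -> R) (x w : vec) : Prop :=
  exists z, bis N (vopp x) x z /\ N z <= 1 /\ z <> vzero /\ w = vscal (/ N z) z.

Definition sine (N : vec -> R) (u v : vec) : R :=
  Rinf (fun r => exists t : R, r = N (vadd u (vscal t v))).

Definition c_B (N : vec -> R) : R :=
  Rinf (fun c => exists x, N x = 1 /\
          c = Rinf (fun r => exists w, P_I N x w /\ r = sine N w x)).

From Stdlib Require Import Reals Lra Lia ZArith Classical.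
From Stdlib Require Import ClassicalEpsilon ClassicalDescription.
From Stdlib Require Import FunctionalExtensionality PropExtensionality.
Open Scope R_scope.

(* Every ingredient of c_B is invariant under linear bijections, so we may take the unit circle
   to be the Euclidean regular 4n-gon, which lies between the Euclidean circles of radii cos θ
   and 1, θ = π/(4n).  Two boundary points a, b satisfy the chord inequality
   cos θ · | |a|² - |b|² | <= 2 sin θ · |a × b|.  If z lies on the bisector of -x and x, then
   z + x and z - x have the same norm, and the chord inequality for them says that z makes a
   Euclidean angle of at least π/2 - θ with x.  So every point of the line through z/‖z‖ in
   direction x has Euclidean norm, hence norm, at least cos θ · cos θ.  Conversely, for x close
   to a vertex and z parallel to the edge through it, z/‖z‖ is the midpoint of the perpendicular
   edge and the sine tends to cos² θ. *)

Lemma is_glb_exists (E : R -> Prop) :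
  (exists x, E x) -> (exists b, is_lower_bound E b) -> exists m, is_glb E m.
Proof.
  intros [x Hx] [b Hb].
  destruct (completeness (fun y => E (- y))) as [M [HM1 HM2]].
  - exists (- b). intros y Hy. specialize (Hb _ Hy). lra.
  - exists (- x). rewrite Ropp_involutive. exact Hx.
  - exists (- M). split.
    + intros y Hy. assert (Hy' : E (- - y)) by (rewrite Ropp_involutive; exact Hy).
      specialize (HM1 _ Hy'). lra.
    + intros c Hc. enough (M <= - c) by lra.
      apply HM2. intros y Hy. specialize (Hc _ Hy). lra.
Qed.

Lemma Rinf_is_glb (E : R -> Prop) :
  (exists x, E x) -> (exists b, is_lower_bound E b) -> is_glb E (Rinf E).
Proof.
  intros Hne Hbd. pose proof (is_glb_exists E Hne Hbd) as Hglb.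
  unfold Rinf. destruct (excluded_middle_informative _) as [h | h]; [| contradiction].
  exact (proj2_sig (constructive_indefinite_description _ h)).
Qed.

Lemma Rinf_le (E : R -> Prop) x : (exists b, is_lower_bound E b) -> E x -> Rinf E <= x.
Proof. intros Hbd Hx. exact (proj1 (Rinf_is_glb E (ex_intro _ x Hx) Hbd) x Hx). Qed.

Lemma le_Rinf (E : R -> Prop) b : (exists x, E x) -> is_lower_bound E b -> b <= Rinf E.
Proof. intros Hne Hb. exact (proj2 (Rinf_is_glb E Hne (ex_intro _ b Hb)) b Hb). Qed.

Lemma Rinf_ext (E F : R -> Prop) : (forall r, E r <-> F r) -> Rinf E = Rinf F.
Proof.
  intros HEF. replace F with E; [reflexivity |].
  apply functional_extensionality. intros r. apply propositional_extensionality, HEF.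
Qed.

Lemma Rinf_eq_approx (E : R -> Prop) m :
  is_lower_bound E m -> (forall eps, 0 < eps -> exists x, E x /\ x < m + eps) -> Rinf E = m.
Proof.
  intros Hm Happrox.
  assert (Hne : exists x, E x) by (destruct (Happrox 1 Rlt_0_1) as [x [Hx _]]; eauto).
  assert (Hge : m <= Rinf E) by exact (le_Rinf E m Hne Hm).
  destruct (Rle_lt_dec (Rinf E) m) as [Hle | Hlt]; [lra |].
  destruct (Happrox (Rinf E - m)) as [x [Hx Hxlt]]; [lra |].
  pose proof (Rinf_le E x (ex_intro _ m Hm) Hx). lra.
Qed.

Definition dot (p q : vec) : R := fst p * fst q + snd p * snd q.
Definition cross (p q : vec) : R := fst p * snd q - snd p * fst q.
Definition sqnorm (p : vec) : R := dot p p.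
Definition rot90 (p : vec) : vec := (- snd p, fst p).

Ltac vec_unfold :=
  repeat match goal with p : vec |- _ => destruct p end;
  unfold vsub, vopp, vadd, vscal, vzero, rot90 in *; cbn [fst snd] in *.

Lemma lagrange_identity p q : sqnorm p * sqnorm q = dot p q ^ 2 + cross p q ^ 2.
Proof. unfold sqnorm, dot, cross. ring. Qed.

Lemma cross_add_scal_r w x t : cross (vadd w (vscal t x)) x = cross w x.
Proof. unfold cross. vec_unfold. ring. Qed.

Lemma sqnorm_scal r v : sqnorm (vscal r v) = r ^ 2 * sqnorm v.
Proof. unfold sqnorm, dot. vec_unfold. ring. Qed.

Lemma cross_scal_l r u v : cross (vscal r u) v = r * cross u v.
Proof. unfold cross. vec_unfold. ring. Qed.

Lemma vscal_inv_l k v : k <> 0 -> vscal (/ k) (vscal k v) = v.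
Proof. intros Hk. vec_unfold. f_equal; field; exact Hk. Qed.

Lemma rot90_scal r v : rot90 (vscal r v) = vscal r (rot90 v).
Proof. vec_unfold. f_equal; ring. Qed.

(* [|cross w x| / |x|] is the Euclidean distance from [w] to the line [R x]. *)
Lemma sqnorm_on_line_ge k w x t : 0 < sqnorm x ->
  k * sqnorm w * sqnorm x <= cross w x ^ 2 -> k * sqnorm w <= sqnorm (vadd w (vscal t x)).
Proof.
  intros Hx Hcone. apply (Rmult_le_reg_r (sqnorm x) _ _ Hx).
  rewrite lagrange_identity, cross_add_scal_r.
  pose proof (pow2_ge_0 (dot (vadd w (vscal t x)) x)). lra.
Qed.

Section NormFacts.

Variable N : vec -> R.
Hypothesis HN : is_norm N.

Lemma norm_scal a x : N (vscal a x) = Rabs a * N x.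
Proof. exact (proj1 (proj2 HN) a x). Qed.

Lemma norm_zero : N vzero = 0.
Proof.
  replace vzero with (vscal 0 vzero) by (vec_unfold; f_equal; ring).
  rewrite norm_scal, Rabs_R0. ring.
Qed.

Lemma norm_nonneg x : 0 <= N x.
Proof.
  pose proof (proj2 (proj2 HN) x (vscal (-1) x)) as Htri.
  replace (vadd x (vscal (-1) x)) with vzero in Htri by (vec_unfold; f_equal; ring).
  rewrite norm_zero, norm_scal, Rabs_left in Htri; lra.
Qed.

Lemma norm_pos x : x <> vzero -> 0 < N x.
Proof.
  intros Hx. destruct (Rle_lt_or_eq_dec 0 (N x) (norm_nonneg x)) as [Hlt | Heq]; [exact Hlt |].
  exfalso. apply Hx, (proj1 HN). symmetry. exact Heq.
Qed.

Lemma norm_normalize x : x <> vzero -> N (vscal (/ N x) x) = 1.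
Proof.
  intros Hx. pose proof (norm_pos x Hx).
  rewrite norm_scal, Rabs_right by (left; apply Rinv_0_lt_compat; lra). field. lra.
Qed.

Lemma scal_norm_normalize x : x <> vzero -> x = vscal (N x) (vscal (/ N x) x).
Proof. intros Hx. pose proof (norm_pos x Hx). vec_unfold. f_equal; field; lra. Qed.

Lemma vzero_of_norm_eq x y : N x = N y -> x = vzero -> y = vzero.
Proof. intros Hxy Hx. apply (proj1 HN). rewrite <- Hxy, Hx. exact norm_zero. Qed.

Lemma sine_nonneg w x : 0 <= sine N w x.
Proof.
  apply le_Rinf; [exists (N (vadd w (vscal 0 x))), 0; reflexivity |].
  intros r [t ->]. apply norm_nonneg.
Qed.

Lemma sine_le w x t : sine N w x <= N (vadd w (vscal t x)).
Proof.
  apply Rinf_le; [| exists t; reflexivity].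
  exists 0. intros r [s ->]. apply norm_nonneg.
Qed.

End NormFacts.

Section LinearInvariance.

Variables (N : vec -> R) (L : vec -> vec).
Hypothesis L_add : forall u v, L (vadd u v) = vadd (L u) (L v).
Hypothesis L_scal : forall a u, L (vscal a u) = vscal a (L u).
Hypothesis L_inj : forall u v, L u = L v -> u = v.
Hypothesis L_surj : forall v, exists u, v = L u.

Lemma linear_zero : L vzero = vzero.
Proof.
  replace vzero with (vscal 0 vzero) by (vec_unfold; f_equal; ring).
  rewrite L_scal. vec_unfold. f_equal; ring.
Qed.

Lemma linear_neq_zero u : u <> vzero -> L u <> vzero.
Proof. intros Hu Hz. apply Hu, L_inj. rewrite Hz, linear_zero. reflexivity. Qed.

Lemma linear_sub u v : L (vsub u v) = vsub (L u) (L v).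
Proof. unfold vsub, vopp. rewrite L_add, L_scal. reflexivity. Qed.

Lemma is_norm_comp : is_norm N -> is_norm (fun v => N (L v)).
Proof.
  intros HN. split; [| split].
  - intros x Hx. apply L_inj. rewrite linear_zero. exact (proj1 HN _ Hx).
  - intros a x. rewrite L_scal. apply (norm_scal N HN).
  - intros x y. rewrite L_add. apply (proj2 (proj2 HN)).
Qed.

Lemma sine_comp w x : sine (fun v => N (L v)) w x = sine N (L w) (L x).
Proof.
  apply Rinf_ext. intros r.
  split; intros [t Ht]; exists t; rewrite Ht, ?L_add, ?L_scal; reflexivity.
Qed.

Lemma P_I_comp x w : P_I (fun v => N (L v)) x w <-> P_I N (L x) (L w).
Proof.
  unfold P_I, bis. split.
  - intros [z [Hbis [Hle [Hz ->]]]]. exists (L z).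
    rewrite L_scal. repeat split; auto using linear_neq_zero.
    unfold vopp. rewrite <- L_scal, <- !linear_sub. exact Hbis.
  - intros [z' [Hbis [Hle [Hz' Hw]]]]. destruct (L_surj z') as [z ->]. exists z.
    unfold vopp in Hbis. rewrite <- L_scal, <- !linear_sub in Hbis.
    repeat split; auto.
    + intros ->. apply Hz', linear_zero.
    + apply L_inj. rewrite L_scal. exact Hw.
Qed.

Lemma c_B_comp : c_B (fun v => N (L v)) = c_B N.
Proof.
  set (inner := fun x => Rinf (fun r => exists w, P_I N x w /\ r = sine N w x)).
  assert (Hinner : forall x,
    Rinf (fun r => exists w, P_I (fun v => N (L v)) x w /\ r = sine (fun v => N (L v)) w x)
    = inner (L x)).
  { intros x. apply Rinf_ext. intros r. split.
    - intros [w [Hw ->]]. exists (L w). rewrite sine_comp, <- P_I_comp. auto.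
    - intros [w' [Hw ->]]. destruct (L_surj w') as [w ->]. exists w.
      rewrite sine_comp, P_I_comp. auto. }
  unfold c_B. fold inner. apply Rinf_ext. intros c. split.
  - intros [x [Hx ->]]. exists (L x). rewrite Hinner. auto.
  - intros [x' [Hx ->]]. destruct (L_surj x') as [x ->]. exists x. rewrite Hinner. auto.
Qed.

End LinearInvariance.

Lemma linmap_add a b c d u v : linmap a b c d (vadd u v) = vadd (linmap a b c d u) (linmap a b c d v).
Proof. unfold linmap. vec_unfold. f_equal; ring. Qed.

Lemma linmap_scal a b c d r u : linmap a b c d (vscal r u) = vscal r (linmap a b c d u).
Proof. unfold linmap. vec_unfold. f_equal; ring. Qed.

Section Linmap.

Variables a b c d : R.
Hypothesis det_neq0 : a * d - b * c <> 0.

Lemma linmap_inj u v : linmap a b c d u = linmap a b c d v -> u = v.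
Proof.
  destruct u as [u1 u2], v as [v1 v2]. unfold linmap; cbn [fst snd]. intros [= E1 E2].
  assert (X : (a * d - b * c) * (u1 - v1) = 0).
  { transitivity (d * (a * u1 + b * u2 - (a * v1 + b * v2)) - b * (c * u1 + d * u2 - (c * v1 + d * v2)));
      [ring | rewrite E1, E2; ring]. }
  assert (Y : (a * d - b * c) * (u2 - v2) = 0).
  { transitivity (a * (c * u1 + d * u2 - (c * v1 + d * v2)) - c * (a * u1 + b * u2 - (a * v1 + b * v2)));
      [ring | rewrite E1, E2; ring]. }
  apply Rmult_integral in X as [X | X]; [contradiction |].
  apply Rmult_integral in Y as [Y | Y]; [contradiction |].
  f_equal; lra.
Qed.

Lemma linmap_surj v : exists u, v = linmap a b c d u.
Proof.
  destruct v as [v1 v2].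
  exists ((d * v1 - b * v2) / (a * d - b * c), (- c * v1 + a * v2) / (a * d - b * c)).
  unfold linmap; cbn [fst snd]. f_equal; field; exact det_neq0.
Qed.

End Linmap.

Lemma abs_cos_add_INR_PI x k : Rabs (cos (x + INR k * PI)) = Rabs (cos x).
Proof.
  induction k as [| k IH].
  - simpl. rewrite Rmult_0_l, Rplus_0_r. reflexivity.
  - rewrite S_INR. replace (x + (INR k + 1) * PI) with (x + INR k * PI + PI) by ring.
    rewrite neg_cos, Rabs_Ropp. exact IH.
Qed.

Lemma abs_cos_add_IZR_PI x q : Rabs (cos (x + IZR q * PI)) = Rabs (cos x).
Proof.
  destruct (Z_le_gt_dec 0 q) as [Hq | Hq].
  - rewrite <- (Z2Nat.id q Hq), <- INR_IZR_INZ. apply abs_cos_add_INR_PI.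
  - replace q with (- Z.of_nat (Z.to_nat (- q)))%Z by lia.
    rewrite opp_IZR, <- INR_IZR_INZ.
    rewrite <- (abs_cos_add_INR_PI (x + - INR (Z.to_nat (- q)) * PI) (Z.to_nat (- q))).
    f_equal. f_equal. ring.
Qed.

Lemma dot_unit_angles A B : dot (cos A, sin A) (cos B, sin B) = cos (A - B).
Proof. unfold dot; cbn [fst snd]. rewrite cos_minus. ring. Qed.

Lemma sqnorm_convex t u v :
  sqnorm (vadd (vscal (1 - t) u) (vscal t v))
  = (1 - t) ^ 2 * sqnorm u + t ^ 2 * sqnorm v + 2 * t * (1 - t) * dot u v.
Proof. unfold sqnorm, dot. vec_unfold. ring. Qed.

Lemma sq_convex_le X Y c t : Rabs X <= c -> Rabs Y <= c -> 0 <= t <= 1 ->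
  ((1 - t) * X + t * Y) ^ 2 <= c ^ 2.
Proof.
  intros HX HY Ht.
  assert (- c <= X <= c) by (revert HX; unfold Rabs; destruct Rcase_abs; lra).
  assert (- c <= Y <= c) by (revert HY; unfold Rabs; destruct Rcase_abs; lra).
  assert (- c <= (1 - t) * X + t * Y <= c) by nra. nra.
Qed.

(* The chord inequality in the frame (u, rot90 u) of an edge with unit normal u: the point
   b = c u + beta rot90 u lies on that edge and a = a1 u + a2 rot90 u is any point of the polygon. *)
Lemma chord_frame_ineq c s a1 a2 beta :
  0 < c -> 0 < s -> c ^ 2 + s ^ 2 = 1 ->
  a1 ^ 2 <= c ^ 2 -> a1 ^ 2 + a2 ^ 2 <= 1 -> beta ^ 2 <= s ^ 2 ->
  c * (a1 ^ 2 + a2 ^ 2 - (c ^ 2 + beta ^ 2)) <= 2 * s * Rabs (beta * a1 - c * a2).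
Proof.
  intros Hc Hs Hcs.
  enough (Hpos : forall a1 a2, 0 <= a2 -> a1 ^ 2 <= c ^ 2 -> a1 ^ 2 + a2 ^ 2 <= 1 -> beta ^ 2 <= s ^ 2 ->
            c * (a1 ^ 2 + a2 ^ 2 - (c ^ 2 + beta ^ 2)) <= 2 * s * Rabs (beta * a1 - c * a2)).
  { intros H1 H2 H3. destruct (Rle_dec 0 a2); [auto |].
    replace (beta * a1 - c * a2) with (- (beta * (- a1) - c * (- a2))) by ring.
    rewrite Rabs_Ropp. replace (a1 ^ 2 + a2 ^ 2) with ((- a1) ^ 2 + (- a2) ^ 2) by ring.
    apply Hpos; nra. }
  clear a1 a2. intros a1 a2 Ha2 H1 H2 H3.
  set (B := Rabs beta).
  assert (HB : B ^ 2 = beta ^ 2) by apply pow2_abs.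
  assert (HB0 : 0 <= B) by apply Rabs_pos.
  assert (HBs : B <= s) by nra.
  assert (Ha1 : Rabs a1 <= c).
  { rewrite <- (Rabs_right c) by lra. apply Rsqr_le_abs_0. unfold Rsqr. lra. }
  destruct (Rle_dec a2 B) as [Hle | Hgt].
  - pose proof (Rabs_pos (beta * a1 - c * a2)).
    assert (a2 ^ 2 <= B ^ 2) by nra. nra.
  - assert (Hcross : c * (a2 - B) <= Rabs (beta * a1 - c * a2)).
    { rewrite <- Rabs_Ropp. eapply Rle_trans; [| apply Rle_abs].
      assert (beta * a1 <= B * c).
      { eapply Rle_trans; [apply Rle_abs |]. rewrite Rabs_mult. apply Rmult_le_compat_l; lra. }
      lra. }
    destruct (Rle_dec a2 s).
    + assert (a2 ^ 2 - B ^ 2 <= 2 * s * (a2 - B)) by nra. nra.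
    + assert (s ^ 2 - B ^ 2 <= 2 * s * (a2 - B)) by nra. nra.
Qed.

Definition theta (n : nat) : R := PI / (4 * INR n).

Definition edge_point (m k : nat) (t : R) : vec :=
  vadd (vscal (1 - t) (reg_vertex m k)) (vscal t (reg_vertex m (S k))).

Section RegularPolygon.

Variable n : nat.
Hypothesis n_pos : (1 <= n)%nat.

Lemma INR_n_ge1 : 1 <= INR n.
Proof. apply (le_INR 1), n_pos. Qed.

Lemma four_n_theta : 4 * INR n * theta n = PI.
Proof. pose proof INR_n_ge1. unfold theta. field. lra. Qed.

Lemma theta_bounds : 0 < theta n <= PI / 4.
Proof.
  pose proof INR_n_ge1. pose proof PI_RGT_0. unfold theta. split.
  - apply Rdiv_lt_0_compat; lra.
  - unfold Rdiv. apply Rmult_le_compat_l; [lra |]. apply Rinv_le_contravar; lra.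
Qed.

Lemma cos_theta_pos : 0 < cos (theta n).
Proof. pose proof theta_bounds. pose proof PI_RGT_0. apply cos_gt_0; lra. Qed.

Lemma sin_theta_pos : 0 < sin (theta n).
Proof. pose proof theta_bounds. pose proof PI_RGT_0. apply sin_gt_0; lra. Qed.

Lemma reg_vertex_angle k :
  reg_vertex (4 * n) k = (cos (2 * INR k * theta n), sin (2 * INR k * theta n)).
Proof.
  pose proof INR_n_ge1. unfold reg_vertex, theta. rewrite mult_INR. simpl (INR 4).
  replace (2 * PI * INR k / ((1 + 1 + 1 + 1) * INR n))
    with (2 * INR k * (PI / (4 * INR n))) by (field; lra).
  reflexivity.
Qed.

(* Reduce the odd multiple modulo [4 n theta = PI] to an odd multiple [r theta]
   with [|r| <= 2n], where the cosine is decreasing. *)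
Lemma abs_cos_odd_theta l : Rabs (cos ((2 * IZR l - 1) * theta n)) <= cos (theta n).
Proof.
  pose proof theta_bounds. pose proof four_n_theta as Hpi. pose proof PI_RGT_0.
  set (nz := Z.of_nat n).
  assert (Hnz : (1 <= nz)%Z) by (unfold nz; lia).
  set (q := ((2 * l - 1 + 2 * nz) / (4 * nz))%Z).
  set (r := (2 * l - 1 - q * (4 * nz))%Z).
  pose proof (Z.div_mod (2 * l - 1 + 2 * nz) (4 * nz) ltac:(lia)) as Hdm.
  pose proof (Z.mod_pos_bound (2 * l - 1 + 2 * nz) (4 * nz) ltac:(lia)) as Hmb.
  fold q in Hdm.
  assert (Hr : (1 <= Z.abs r <= 2 * nz)%Z).
  { assert (r <> 0%Z) by (unfold r; lia). unfold r in *. lia. }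
  assert (E : (2 * IZR l - 1) * theta n = IZR r * theta n + IZR q * PI).
  { rewrite <- Hpi. unfold r, nz. rewrite minus_IZR, !mult_IZR, minus_IZR, mult_IZR.
    rewrite <- INR_IZR_INZ. simpl. ring. }
  assert (Habs : 1 <= Rabs (IZR r) <= 2 * INR n).
  { rewrite <- abs_IZR, INR_IZR_INZ. fold nz.
    split; [apply (IZR_le 1) | replace 2 with (IZR 2) by reflexivity; rewrite <- mult_IZR; apply IZR_le];
      lia. }
  assert (Ec : cos (IZR r * theta n) = cos (Rabs (IZR r) * theta n)).
  { destruct (Rle_dec 0 (IZR r)).
    - rewrite Rabs_right; lra.
    - rewrite Rabs_left, <- cos_neg by lra. f_equal. ring. }
  rewrite E, abs_cos_add_IZR_PI, Ec.
  assert (B : theta n <= Rabs (IZR r) * theta n <= PI / 2) by (split; nra).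
  rewrite Rabs_right by (apply Rle_ge, cos_ge_0; lra).
  apply cos_decr_1; lra.
Qed.

Lemma on_reg_polygon_sqnorm p :
  on_reg_polygon (4 * n) p -> cos (theta n) ^ 2 <= sqnorm p <= 1.
Proof.
  intros [k [t [_ [Ht ->]]]]. rewrite !reg_vertex_angle, sqnorm_convex, dot_unit_angles.
  unfold sqnorm. rewrite !dot_unit_angles, !Rminus_diag, cos_0.
  replace (2 * INR k * theta n - 2 * INR (S k) * theta n) with (- (2 * theta n))
    by (rewrite S_INR; ring).
  rewrite cos_neg, cos_2a_cos.
  pose proof (COS_bound (theta n)).
  assert (0 <= t * (1 - t) <= 1 / 4)
    by (split; [apply Rmult_le_pos | pose proof (pow2_ge_0 (t - 1 / 2))]; lra).
  set (c := cos (theta n)) in *.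
  replace ((1 - t) ^ 2 * 1 + t ^ 2 * 1 + 2 * t * (1 - t) * (2 * c * c - 1))
    with (1 - 4 * (t * (1 - t)) * (1 - c ^ 2)) by ring.
  assert (0 <= 1 - c ^ 2) by nra.
  split; nra.
Qed.

Lemma polygon_edge_frame b : on_reg_polygon (4 * n) b ->
  exists u beta, sqnorm u = 1 /\ beta ^ 2 <= sin (theta n) ^ 2 /\
    b = vadd (vscal (cos (theta n)) u) (vscal beta (rot90 u)) /\
    forall a, on_reg_polygon (4 * n) a -> dot a u ^ 2 <= cos (theta n) ^ 2.
Proof.
  intros [k [t [_ [Ht ->]]]].
  set (phi := (2 * INR k + 1) * theta n).
  exists (cos phi, sin phi), ((2 * t - 1) * sin (theta n)).
  split; [| split; [| split]].
  - unfold sqnorm. rewrite dot_unit_angles, Rminus_diag. apply cos_0.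
  - rewrite Rpow_mult_distr. pose proof (pow2_ge_0 (sin (theta n))).
    assert ((2 * t - 1) ^ 2 <= 1) by nra. nra.
  - rewrite !reg_vertex_angle, S_INR.
    replace (2 * INR k * theta n) with (phi - theta n) by (unfold phi; ring).
    replace (2 * (INR k + 1) * theta n) with (phi + theta n) by (unfold phi; ring).
    rewrite cos_minus, sin_minus, cos_plus, sin_plus.
    vec_unfold. f_equal; ring.
  - intros a [j [v [_ [Hv ->]]]].
    replace (dot (vadd (vscal (1 - v) (reg_vertex (4 * n) j)) (vscal v (reg_vertex (4 * n) (S j))))
              (cos phi, sin phi))
      with ((1 - v) * dot (reg_vertex (4 * n) j) (cos phi, sin phi)
            + v * dot (reg_vertex (4 * n) (S j)) (cos phi, sin phi))
      by (unfold dot; vec_unfold; ring).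
    rewrite !reg_vertex_angle, !dot_unit_angles.
    apply sq_convex_le; [| | exact Hv].
    + replace (2 * INR j * theta n - phi)
        with ((2 * IZR (Z.of_nat j - Z.of_nat k) - 1) * theta n)
        by (rewrite minus_IZR, <- !INR_IZR_INZ; unfold phi; ring).
      apply abs_cos_odd_theta.
    + replace (2 * INR (S j) * theta n - phi)
        with ((2 * IZR (Z.of_nat (S j) - Z.of_nat k) - 1) * theta n)
        by (rewrite minus_IZR, <- !INR_IZR_INZ; unfold phi; ring).
      apply abs_cos_odd_theta.
Qed.

Lemma polygon_chord_oriented a b : on_reg_polygon (4 * n) a -> on_reg_polygon (4 * n) b ->
  cos (theta n) * (sqnorm a - sqnorm b) <= 2 * sin (theta n) * Rabs (cross a b).
Proof.
  intros Ha Hb.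
  destruct (polygon_edge_frame b Hb) as [u [beta [Hu [Hbeta [-> Hface]]]]].
  pose proof (Hface a Ha) as Ha1. pose proof (on_reg_polygon_sqnorm a Ha) as [_ Ha2].
  assert (Ea : sqnorm a = dot a u ^ 2 + dot a (rot90 u) ^ 2).
  { rewrite <- (Rmult_1_r (sqnorm a)), <- Hu. unfold sqnorm, dot. vec_unfold. ring. }
  assert (Eb : sqnorm (vadd (vscal (cos (theta n)) u) (vscal beta (rot90 u)))
               = cos (theta n) ^ 2 + beta ^ 2).
  { transitivity ((cos (theta n) ^ 2 + beta ^ 2) * sqnorm u); [| rewrite Hu; ring].
    unfold sqnorm, dot. vec_unfold. ring. }
  assert (Ec : cross a (vadd (vscal (cos (theta n)) u) (vscal beta (rot90 u)))
               = beta * dot a u - cos (theta n) * dot a (rot90 u)).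
  { unfold cross, dot. vec_unfold. ring. }
  rewrite Eb, Ec, Ea. rewrite Ea in Ha2.
  apply chord_frame_ineq; auto using cos_theta_pos, sin_theta_pos.
  rewrite Rplus_comm, <- !Rsqr_pow2. apply sin2_cos2.
Qed.

Lemma polygon_chord a b : on_reg_polygon (4 * n) a -> on_reg_polygon (4 * n) b ->
  cos (theta n) * Rabs (sqnorm a - sqnorm b) <= 2 * sin (theta n) * Rabs (cross a b).
Proof.
  intros Ha Hb.
  pose proof (polygon_chord_oriented a b Ha Hb) as Hab.
  pose proof (polygon_chord_oriented b a Hb Ha) as Hba.
  replace (cross b a) with (- cross a b) in Hba by (unfold cross; ring).
  rewrite Rabs_Ropp in Hba.
  destruct (Rle_dec 0 (sqnorm a - sqnorm b)).
  - rewrite Rabs_right; lra.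
  - rewrite Rabs_left; lra.
Qed.

Lemma reg_vertex_add_n k : reg_vertex (4 * n) (k + n) = rot90 (reg_vertex (4 * n) k).
Proof.
  pose proof four_n_theta. rewrite !reg_vertex_angle, plus_INR.
  replace (2 * (INR k + INR n) * theta n) with (2 * INR k * theta n + PI / 2) by lra.
  rewrite cos_plus, sin_plus, cos_PI2, sin_PI2. unfold rot90; cbn [fst snd]. f_equal; ring.
Qed.

Lemma reg_vertex_periodic k : reg_vertex (4 * n) (k + 4 * n) = reg_vertex (4 * n) k.
Proof.
  pose proof four_n_theta. rewrite !reg_vertex_angle, plus_INR, mult_INR.
  replace (2 * (INR k + INR 4 * INR n) * theta n) with (2 * INR k * theta n + 2 * INR 1 * PI)
    by (simpl; lra).
  rewrite cos_period, sin_period. reflexivity.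
Qed.

Lemma edge_point_add_n k t : edge_point (4 * n) (k + n) t = rot90 (edge_point (4 * n) k t).
Proof.
  unfold edge_point. change (S (k + n)) with (S k + n)%nat.
  rewrite !reg_vertex_add_n. vec_unfold. f_equal; ring.
Qed.

Lemma edge_point_periodic k t : edge_point (4 * n) (k + 4 * n) t = edge_point (4 * n) k t.
Proof.
  unfold edge_point. change (S (k + 4 * n)) with (S k + 4 * n)%nat.
  rewrite !reg_vertex_periodic. reflexivity.
Qed.

Lemma on_reg_polygon_rot90 p : on_reg_polygon (4 * n) p -> on_reg_polygon (4 * n) (rot90 p).
Proof.
  intros [k [t [Hk [Ht ->]]]]. fold (edge_point (4 * n) k t). rewrite <- edge_point_add_n.
  destruct (lt_dec (k + n) (4 * n)) as [Hlt | Hge].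
  - exists (k + n)%nat, t. auto.
  - exists (k + n - 4 * n)%nat, t. split; [lia | split; [exact Ht |]].
    transitivity (edge_point (4 * n) (k + n - 4 * n + 4 * n) t); [f_equal; lia |].
    apply edge_point_periodic.
Qed.

Lemma reg_vertex_0 : reg_vertex (4 * n) 0 = (1, 0).
Proof.
  rewrite reg_vertex_angle. simpl INR. rewrite Rmult_0_r, Rmult_0_l, cos_0, sin_0. reflexivity.
Qed.

Lemma reg_vertex_1 : reg_vertex (4 * n) 1 =
  (1 - 2 * sin (theta n) ^ 2, 2 * sin (theta n) * cos (theta n)).
Proof.
  rewrite reg_vertex_angle. simpl INR. rewrite Rmult_1_r, cos_2a_sin, sin_2a.
  f_equal. ring.
Qed.

Lemma reg_vertex_n : reg_vertex (4 * n) n = (- 0, 1).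
Proof. pose proof (reg_vertex_add_n 0) as E. rewrite reg_vertex_0 in E. exact E. Qed.

Lemma reg_vertex_Sn : reg_vertex (4 * n) (S n) =
  (- (2 * sin (theta n) * cos (theta n)), 1 - 2 * sin (theta n) ^ 2).
Proof. pose proof (reg_vertex_add_n 1) as E. rewrite reg_vertex_1 in E. exact E. Qed.

Lemma edge_point_0_chord tau :
  vscal tau (vsub (reg_vertex (4 * n) 1) (reg_vertex (4 * n) 0))
  = vscal (2 * tau * sin (theta n) / cos (theta n)) (edge_point (4 * n) n (/ 2)).
Proof.
  pose proof cos_theta_pos. pose proof (sin2_cos2 (theta n)) as Hsc. rewrite !Rsqr_pow2 in Hsc.
  unfold edge_point. rewrite reg_vertex_0, reg_vertex_1, reg_vertex_n, reg_vertex_Sn.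
  vec_unfold. f_equal; field_simplify_eq; try lra.
  replace (cos (theta n) ^ 2) with (1 - sin (theta n) ^ 2) by lra. ring.
Qed.

Lemma edge_point_n_line tau : 2 * tau * sin (theta n) ^ 2 <> 1 ->
  vadd (edge_point (4 * n) n (/ 2))
    (vscal (sin (theta n) * cos (theta n) / (1 - 2 * tau * sin (theta n) ^ 2))
       (edge_point (4 * n) 0 tau))
  = vscal (cos (theta n) ^ 2 / (1 - 2 * tau * sin (theta n) ^ 2)) (edge_point (4 * n) n 0).
Proof.
  intros Htau. pose proof (sin2_cos2 (theta n)) as Hsc. rewrite !Rsqr_pow2 in Hsc.
  unfold edge_point. rewrite reg_vertex_0, reg_vertex_1, reg_vertex_n, reg_vertex_Sn.
  vec_unfold. f_equal; field_simplify_eq; try lra.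
  replace (cos (theta n) ^ 2) with (1 - sin (theta n) ^ 2) by lra. ring.
Qed.

End RegularPolygon.

Section PolygonNorm.

Variable n : nat.
Variable M : vec -> R.
Hypothesis n_pos : (1 <= n)%nat.
Hypothesis M_norm : is_norm M.
Hypothesis M_unit_circle : forall v, M v = 1 <-> on_reg_polygon (4 * n) v.

Lemma normalize_on_polygon v : v <> vzero -> on_reg_polygon (4 * n) (vscal (/ M v) v).
Proof. intros Hv. apply M_unit_circle, norm_normalize; assumption. Qed.

Lemma sqnorm_le_norm v : sqnorm v <= M v ^ 2.
Proof.
  destruct (classic (v = vzero)) as [-> | Hv].
  - rewrite (norm_zero M M_norm). unfold sqnorm, dot, vzero; cbn [fst snd]. lra.
  - pose proof (on_reg_polygon_sqnorm n n_pos _ (normalize_on_polygon v Hv)) as [_ Hle].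
    rewrite (scal_norm_normalize M M_norm v Hv) at 1. rewrite sqnorm_scal.
    pose proof (pow2_ge_0 (M v)). nra.
Qed.

Lemma norm_rot90 v : M (rot90 v) = M v.
Proof.
  destruct (classic (v = vzero)) as [-> | Hv].
  - unfold rot90, vzero; cbn [fst snd]. rewrite Ropp_0. reflexivity.
  - pose proof (norm_pos M M_norm v Hv).
    rewrite (scal_norm_normalize M M_norm v Hv) at 1. rewrite rot90_scal, (norm_scal M M_norm).
    assert (Hrot : M (rot90 (vscal (/ M v) v)) = 1).
    { apply M_unit_circle, on_reg_polygon_rot90, normalize_on_polygon; assumption. }
    rewrite Hrot, Rabs_right; lra.
Qed.

Lemma chord_eq_norm u v : u <> vzero -> M u = M v ->
  cos (theta n) * Rabs (sqnorm u - sqnorm v) <= 2 * sin (theta n) * Rabs (cross u v).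
Proof.
  intros Hu Huv.
  assert (Hv : v <> vzero)
    by (intros Hv; apply Hu; exact (vzero_of_norm_eq M M_norm v u (eq_sym Huv) Hv)).
  set (k := M u) in *. assert (Hk : 0 < k) by exact (norm_pos M M_norm u Hu).
  pose proof (polygon_chord n n_pos _ _ (normalize_on_polygon u Hu) (normalize_on_polygon v Hv)) as Hch.
  rewrite <- Huv in Hch. fold k in Hch.
  rewrite !sqnorm_scal in Hch.
  replace (cross (vscal (/ k) u) (vscal (/ k) v)) with ((/ k) ^ 2 * cross u v) in Hch
    by (unfold cross; vec_unfold; ring).
  rewrite <- Rmult_minus_distr_l, !Rabs_mult, (Rabs_right ((/ k) ^ 2)) in Hch
    by (apply Rle_ge, pow2_ge_0).
  assert (0 < (/ k) ^ 2) by (apply pow_lt, Rinv_0_lt_compat, Hk).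
  nra.
Qed.

Lemma bis_cross_sq_ge x z : M x = 1 -> bis M (vopp x) x z ->
  cos (theta n) ^ 2 * sqnorm z * sqnorm x <= cross z x ^ 2.
Proof.
  intros Hx Hbis. unfold bis in Hbis.
  assert (Hsum : vsub z (vopp x) <> vzero).
  { intros H0. pose proof (vzero_of_norm_eq M M_norm _ _ Hbis H0) as H1.
    assert (x = vzero) as ->.
    { revert H0 H1. vec_unfold. intros [= E1 E2] [= E3 E4]. f_equal; lra. }
    rewrite (norm_zero M M_norm) in Hx. lra. }
  pose proof (chord_eq_norm _ _ Hsum Hbis) as Hch.
  replace (sqnorm (vsub z (vopp x)) - sqnorm (vsub z x)) with (4 * dot z x) in Hch
    by (unfold sqnorm, dot; vec_unfold; ring).
  replace (cross (vsub z (vopp x)) (vsub z x)) with (- (2 * cross z x)) in Hch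
    by (unfold cross; vec_unfold; ring).
  rewrite Rabs_Ropp, !Rabs_mult, !(Rabs_right 4), !(Rabs_right 2) in Hch by lra.
  pose proof (cos_theta_pos n n_pos). pose proof (sin_theta_pos n n_pos).
  assert (Hdc : cos (theta n) * Rabs (dot z x) <= sin (theta n) * Rabs (cross z x)) by lra.
  assert (Hsq : (cos (theta n) * Rabs (dot z x)) ^ 2 <= (sin (theta n) * Rabs (cross z x)) ^ 2).
  { apply pow_incr. split; [| exact Hdc]. pose proof (Rabs_pos (dot z x)). nra. }
  rewrite !Rpow_mult_distr, !pow2_abs in Hsq.
  pose proof (sin2_cos2 (theta n)) as Hsc. rewrite !Rsqr_pow2 in Hsc.
  rewrite Rmult_assoc, lagrange_identity. nra.
Qed.

Lemma bis_line_norm_ge x z t : M x = 1 -> bis M (vopp x) x z -> z <> vzero ->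
  cos (theta n) ^ 2 <= M (vadd (vscal (/ M z) z) (vscal t x)).
Proof.
  intros Hx Hbis Hz.
  set (w := vscal (/ M z) z).
  pose proof (on_reg_polygon_sqnorm n n_pos w (normalize_on_polygon z Hz)) as [Hw _].
  pose proof (on_reg_polygon_sqnorm n n_pos x (proj1 (M_unit_circle x) Hx)) as [Hxc _].
  pose proof (cos_theta_pos n n_pos) as Hc.
  assert (Hcone : cos (theta n) ^ 2 * sqnorm w * sqnorm x <= cross w x ^ 2).
  { unfold w. rewrite sqnorm_scal, cross_scal_l, Rpow_mult_distr.
    replace (cos (theta n) ^ 2 * ((/ M z) ^ 2 * sqnorm z) * sqnorm x)
      with ((/ M z) ^ 2 * (cos (theta n) ^ 2 * sqnorm z * sqnorm x)) by ring.
    apply Rmult_le_compat_l; [apply pow2_ge_0 | apply bis_cross_sq_ge; assumption]. }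
  assert (Hc2 : 0 < cos (theta n) ^ 2) by (apply pow_lt, Hc).
  pose proof (sqnorm_on_line_ge _ w x t ltac:(lra) Hcone) as Hline.
  pose proof (sqnorm_le_norm (vadd w (vscal t x))).
  pose proof (norm_nonneg M M_norm (vadd w (vscal t x))).
  nra.
Qed.

Lemma P_I_rot90 x : M x = 1 -> P_I M x (rot90 x).
Proof.
  intros Hx. assert (Hrx : M (rot90 x) = 1) by (rewrite norm_rot90; exact Hx).
  exists (rot90 x). repeat split.
  - unfold bis. rewrite <- (norm_rot90 (vsub (rot90 x) (vopp x))).
    f_equal. vec_unfold. f_equal; ring.
  - lra.
  - intros H0. rewrite H0, (norm_zero M M_norm) in Hrx. lra.
  - rewrite Hrx, Rinv_1. vec_unfold. f_equal; ring.
Qed.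

Lemma sine_ge_cos2 x w : M x = 1 -> P_I M x w -> cos (theta n) ^ 2 <= sine M w x.
Proof.
  intros Hx [z [Hbis [_ [Hz ->]]]].
  apply le_Rinf; [exists (M (vadd (vscal (/ M z) z) (vscal 0 x))), 0; reflexivity |].
  intros r [t ->]. apply bis_line_norm_ge; assumption.
Qed.

Lemma edge_point_norm k t : (k < 4 * n)%nat -> 0 <= t <= 1 -> M (edge_point (4 * n) k t) = 1.
Proof. intros Hk Ht. apply M_unit_circle. exists k, t. auto. Qed.

(* [x] lies on the edge [V_0 V_1] near [V_0] and [z] is parallel to that edge, so [z / M z]
   is the midpoint of the perpendicular edge [V_n V_(n+1)]; the line through it in direction
   [x] meets the ray through [V_n] at [cos^2 theta / (1 - 2 tau sin^2 theta) V_n]. *)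
Lemma sine_near_vertex_le tau : 0 < tau <= 1 / 4 -> tau <= cos (theta n) / 2 ->
  exists x w, M x = 1 /\ P_I M x w /\
    sine M w x <= cos (theta n) ^ 2 / (1 - 2 * tau * sin (theta n) ^ 2).
Proof.
  intros Htau Htau_c.
  pose proof (cos_theta_pos n n_pos) as Hc. pose proof (sin_theta_pos n n_pos) as Hs.
  pose proof (sin2_cos2 (theta n)) as Hsc. rewrite !Rsqr_pow2 in Hsc.
  assert (Hn4 : (0 < 4 * n /\ n < 4 * n)%nat) by lia.
  set (x := edge_point (4 * n) 0 tau).
  set (z := vscal tau (vsub (reg_vertex (4 * n) 1) (reg_vertex (4 * n) 0))).
  set (kappa := 2 * tau * sin (theta n) / cos (theta n)).
  assert (Hkappa : 0 < kappa <= 1).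
  { unfold kappa. split; [apply Rdiv_lt_0_compat; nra |].
    apply Rmult_le_reg_r with (cos (theta n)); [exact Hc |]. field_simplify; nra. }
  assert (Hmid : M (edge_point (4 * n) n (/ 2)) = 1) by (apply edge_point_norm; lra || lia).
  assert (Hz : M z = kappa).
  { unfold z. rewrite (edge_point_0_chord n n_pos). fold kappa.
    rewrite (norm_scal M M_norm), Hmid, Rabs_right; lra. }
  exists x, (edge_point (4 * n) n (/ 2)).
  split; [apply edge_point_norm; lra || lia | split].
  - exists z. repeat split.
    + unfold bis.
      replace (vsub z (vopp x)) with (edge_point (4 * n) 0 (2 * tau))
        by (unfold z, x, edge_point; vec_unfold; f_equal; ring).
      replace (vsub z x) with (vscal (-1) (edge_point (4 * n) 0 0))
        by (unfold z, x, edge_point; vec_unfold; f_equal; ring).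
      rewrite (norm_scal M M_norm), !edge_point_norm by (lra || lia).
      rewrite Rabs_left; lra.
    + lra.
    + intros H0. rewrite H0, (norm_zero M M_norm) in Hz. lra.
    + rewrite Hz. unfold z. rewrite (edge_point_0_chord n n_pos). fold kappa.
      rewrite vscal_inv_l by lra. reflexivity.
  - eapply Rle_trans.
    { apply (sine_le M M_norm _ _ (sin (theta n) * cos (theta n) / (1 - 2 * tau * sin (theta n) ^ 2))). }
    rewrite (edge_point_n_line n n_pos), (norm_scal M M_norm), edge_point_norm by (nra || lra || lia).
    rewrite Rabs_right; [lra |]. apply Rle_ge, Rlt_le, Rdiv_lt_0_compat; [apply pow_lt |]; nra.
Qed.

Lemma sine_approx_cos2 eps : 0 < eps ->
  exists x w, M x = 1 /\ P_I M x w /\ sine M w x < cos (theta n) ^ 2 + eps.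
Proof.
  intros Heps.
  pose proof (cos_theta_pos n n_pos) as Hc.
  pose proof (sin2_cos2 (theta n)) as Hsc. rewrite !Rsqr_pow2 in Hsc.
  set (c := cos (theta n)) in *. set (s := sin (theta n)) in *.
  set (tau := Rmin (Rmin (1 / 4) (eps / 8)) (c / 2)).
  assert (Htau : 0 < tau) by (unfold tau; repeat apply Rmin_glb_lt; lra).
  assert (Htau4 : tau <= 1 / 4) by (unfold tau; eapply Rle_trans; apply Rmin_l).
  assert (Htau8 : tau <= eps / 8) by (unfold tau; eapply Rle_trans; [apply Rmin_l | apply Rmin_r]).
  assert (Htau_c : tau <= c / 2) by apply Rmin_r.
  destruct (sine_near_vertex_le tau (conj Htau Htau4) Htau_c) as [x [w [Hx [Hw Hsine]]]].
  exists x, w. split; [exact Hx | split; [exact Hw |]].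
  eapply Rle_lt_trans; [exact Hsine |].
  set (De := 1 - 2 * tau * s ^ 2).
  assert (HDe : 1 / 2 <= De) by (unfold De; nra).
  apply (Rmult_lt_reg_r De); [lra |].
  unfold Rdiv. rewrite Rmult_assoc, Rinv_l, Rmult_1_r by lra.
  assert (Hs2 : 0 <= s ^ 2 <= 1) by (split; [apply pow2_ge_0 | pose proof (pow2_ge_0 c); lra]).
  assert (Hsc1 : 0 <= s ^ 2 * c ^ 2 <= 1) by (pose proof (pow2_ge_0 c); split; nra).
  assert (2 * tau * s ^ 2 * c ^ 2 <= eps / 4) by nra.
  assert (2 * tau * s ^ 2 <= 1 / 2) by nra.
  assert (2 * tau * s ^ 2 * eps <= eps / 2) by nra.
  unfold De. fold c. lra.
Qed.

Theorem c_B_polygon_norm : c_B M = cos (theta n) ^ 2.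
Proof.
  apply Rinf_eq_approx.
  - intros c [x [Hx ->]]. apply le_Rinf.
    + exists (sine M (rot90 x) x), (rot90 x). split; [apply P_I_rot90, Hx | reflexivity].
    + intros r [w [Hw ->]]. apply sine_ge_cos2; assumption.
  - intros eps Heps. destruct (sine_approx_cos2 eps Heps) as [x [w [Hx [Hw Hsine]]]].
    eexists. split; [exists x; split; [exact Hx | reflexivity] |].
    eapply Rle_lt_trans; [| exact Hsine].
    apply Rinf_le; [| exists w; auto].
    exists 0. intros r [w' [_ ->]]. apply sine_nonneg, M_norm.
Qed.

End PolygonNorm.

Theorem proposition4p3 (n : nat) (N : vec -> R) :
  (1 <= n)%nat ->
  is_norm N ->
  unit_circle_affine_regular N (4 * n) ->
  c_B N = (cos (PI / (4 * INR n))) ^ 2.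
Proof.
  intros Hn HN [a [b [c [d [Hdet Hcircle]]]]].
  pose proof (linmap_inj a b c d Hdet) as L_inj.
  pose proof (linmap_surj a b c d Hdet) as L_surj.
  rewrite <- (c_B_comp N (linmap a b c d) (linmap_add a b c d) (linmap_scal a b c d) L_inj L_surj).
  apply (c_B_polygon_norm n); [exact Hn | apply is_norm_comp; auto using linmap_add, linmap_scal |].
  intros v. rewrite Hcircle. split.
  - intros [p [Hp Hv]]. apply L_inj in Hv. subst. exact Hp.
  - intros Hv. exists v. auto.
Qed.
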